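(* Let $X$ be a Tychonoff space and $A\subseteq X$ a clopen subset. Then (a) $\operatorname{Homeo}_{cpt}(A)$ naturally embeds (by extending homeomorphisms by the identity on $X\setminus A$) as a closed topological subgroup of $\operatorname{Homeo}_{cpt}(X)$; and (b) if $X$ has CSHP, then so does $A$.
   Context: For a Tychonoff space $Y$, $\operatorname{Homeo}_{cpt}(Y)$ is the group of homeomorphisms of $Y$ with compact support $\operatorname{cl}_Y\{y\mid h(y)\neq y\}$; each extends to a homeomorphism of $\beta Y$ that is the identity on $\beta Y\setminus Y$, and $\operatorname{Homeo}_{cpt}(Y)$ is given the compact-open topology induced from $\beta Y$. For compact $K\subseteq Y$, $\operatorname{Homeo}_K(Y)$ is the subgroup of homeomorphisms fixing every point outside $K$. $Y$ has CSHP (Compactly Supported Homeomorphism Property) if the colimit space topology on $\bigcup_{K\in\mathscr K(Y)}\operatorname{Homeo}_K(Y)=\operatorname{Homeo}_{cpt}(Y)$, namely $\{U\mid U\cap\operatorname{Homeo}_K(Y)\text{ open in }\operatorname{Homeo}_K(Y)\ \forall K\}$ ($\mathscr K(Y)$ the compact subsets of $Y$), coincides with the topology of $\operatorname{Homeo}_{cpt}(Y)$. *)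

From HB Require Import structures.
From mathcomp Require Import all_boot all_algebra.
From mathcomp Require Import all_classical all_reals all_analysis.

Set Implicit Arguments.
Unset Strict Implicit.
Unset Printing Implicit Defensive.

Local Open Scope classical_set_scope.

Definition tychonoff_space (T : topologicalType) : Prop :=
  completely_regular_space T /\ hausdorff_space T.

(** Such a pair exists for every Tychonoff [Y] and is unique up to a
    homeomorphism commuting with the embeddings. *)
Definition is_stone_cech (Y bY : topologicalType) (e : Y -> bY) : Prop :=
  [/\ compact [set: bY], hausdorff_space bY, continuous e & injective e] /\
  [/\
      (forall U : set Y, open U -> exists V : set bY, open V /\ U = e @^-1` V),
      closure (range e) = [set: bY] &
      forall (K : topologicalType) (f : Y -> K),
        compact [set: K] -> hausdorff_space K -> continuous f ->
        exists g : bY -> K, continuous g /\ (forall y, g (e y) = f y)].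

Definition is_homeo (Y : topologicalType) (h : Y -> Y) : Prop :=
  continuous h /\
  exists g : Y -> Y, [/\ continuous g, cancel h g & cancel g h].

Definition support (Y : topologicalType) (h : Y -> Y) : set Y :=
  closure [set y | h y <> y].

Definition Homeo_cpt (Y : topologicalType) : set (Y -> Y) :=
  [set h | is_homeo h /\ compact (support h)].
Arguments Homeo_cpt Y : clear implicits.

Definition Homeo_K (Y : topologicalType) (K : set Y) : set (Y -> Y) :=
  [set h | Homeo_cpt Y h /\ forall y, ~ K y -> h y = y].

(** The extension of [h : Y -> Y] to [bY] which is the identity on
    [bY \ e(Y)] (well defined since [e] is injective). *)
Definition bext (Y bY : topologicalType) (e : Y -> bY) (h : Y -> Y)
  (z : bY) : bY :=
  match pselect (exists y, e y = z) with
  | left P => e (h (projT1 (cid P)))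
  | right _ => z
  end.

(** Open subsets of Homeo_cpt(Y) for the compact-open topology induced from
    bY (the initial topology of [bext e] into the compact-open topology on
    maps [bY -> bY]). *)
Definition HC_open (Y bY : topologicalType) (e : Y -> bY)
  (U : set (Y -> Y)) : Prop :=
  exists V : set {compact-open, bY -> bY},
    open V /\ U = Homeo_cpt Y `&` (bext e) @^-1` V.

Definition HC_subspace_open (Y bY : topologicalType) (e : Y -> bY)
  (S U : set (Y -> Y)) : Prop :=
  exists W, HC_open e W /\ U = S `&` W.

(** Open subsets for the colimit topology over the Homeo_K(Y), K compact. *)
Definition HC_colim_open (Y bY : topologicalType) (e : Y -> bY)
  (U : set (Y -> Y)) : Prop :=
  U `<=` Homeo_cpt Y /\
  forall K : set Y, compact K -> HC_subspace_open e (Homeo_K K) (U `&` Homeo_K K).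

(** CSHP (relative to the Stone-Cech compactification [e : Y -> bY]):
    the colimit topology coincides with the topology of Homeo_cpt(Y). *)
Definition CSHP (Y bY : topologicalType) (e : Y -> bY) : Prop :=
  forall U : set (Y -> Y), HC_colim_open e U <-> HC_open e U.

Definition ext_id (X : topologicalType) (A : set X) (h : A -> A) (x : X) : X :=
  match pselect (A x) with
  | left Ax => set_val (h (exist _ x (mem_set Ax)))
  | right _ => x
  end.

(* Since A is clopen, extension by the identity is a group monomorphism
   Homeo_cpt(A) -> Homeo_cpt(X) whose image consists of the maps fixing X \ A
   pointwise, and every point a0 of A gives a continuous retraction X -> A.
   By the universal property, A -> X -> bX extends to j : bA -> bX, which has
   the continuous left inverse p extending X -> A -> bA.  On bX the extension
   of ext_id h is the extension of bh by the identity along j, and conversely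
   bh = p o b(ext_id h) o j; both operations are continuous for the
   compact-open topologies, so ext_id is a topological embedding.  Its image is
   closed: a map lies outside it iff it moves some eX x with x not in A, an
   open condition.  For CSHP, a colimit-open U in Homeo_cpt(A) gives the
   colimit-open set ext_id(U) u (Homeo_cpt(X) \ image) in Homeo_cpt(X), which
   is open when X has CSHP and whose preimage under ext_id is U. *)

From HB Require Import structures.
From mathcomp Require Import all_boot all_algebra.
From mathcomp Require Import all_classical all_reals all_analysis.
Local Open Scope classical_set_scope.
Set Implicit Arguments.
Unset Strict Implicit.
Unset Printing Implicit Defensive.

Section StoneCech.
Variables (Y bY : topologicalType) (e : Y -> bY).
Hypothesis sc : is_stone_cech e.

Lemma stone_cech_compact : compact [set: bY]. Proof. by case: sc => -[]. Qed.
Lemma stone_cech_hausdorff : hausdorff_space bY. Proof. by case: sc => -[]. Qed.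
Lemma stone_cech_continuous : continuous e. Proof. by case: sc => -[]. Qed.
Lemma stone_cech_injective : injective e. Proof. by case: sc => -[]. Qed.

Lemma stone_cech_extend (K : topologicalType) (f : Y -> K) :
  compact [set: K] -> hausdorff_space K -> continuous f ->
  exists g : bY -> K, continuous g /\ (forall y, g (e y) = f y).
Proof. by case: sc => _ [_ _]; apply. Qed.

Lemma stone_cech_nbhs (z : bY) (P : set bY) :
  nbhs z P -> exists y, P (e y).
Proof.
case: sc => _ [_ dense _] zP.
have : closure (range e) z by rewrite dense.
by move=> /(_ _ zP) [_ [[y _ <-] Py]]; exists y.
Qed.

Lemma stone_cech_inhabited (z : bY) : inhabited Y.
Proof. by have [y _] := stone_cech_nbhs (@filterT _ _ _ : nbhs z setT); exists. Qed.

Lemma stone_cech_ext_unique (Z : topologicalType) (f g : bY -> Z) :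
  hausdorff_space Z -> continuous f -> continuous g ->
  (forall y, f (e y) = g (e y)) -> f = g.
Proof.
move=> hZ cf cg fg; apply: funext => z; apply: contrapT => /eqP fgz.
move: hZ; rewrite open_hausdorff => /(_ _ _ fgz) [[P Q]] /= [Pf Qg] [oP oQ /eqP PQ].
have [|y [Py Qy]] := @stone_cech_nbhs z (f @^-1` P `&` g @^-1` Q).
  by apply: filterI; apply: open_nbhs_nbhs; split;
    [exact: (continuousP f).1|by rewrite /= -inE|exact: (continuousP g).1|by rewrite /= -inE].
have : (P `&` Q) (f (e y)) by split => //; rewrite fg.
by rewrite PQ.
Qed.

End StoneCech.
Lemma open_const (T : topologicalType) (P : Prop) : open [set _ : T | P].
Proof.
have [p|np] := pselect P.
  by rewrite (_ : [set _ | P] = setT); [exact: openT|apply/seteqP; split].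
by rewrite (_ : [set _ | P] = set0); [exact: open0|apply/seteqP; split].
Qed.

Section ClopenSubspace.
Variables (X : topologicalType) (A : set X).

Lemma set_val_continuous : continuous (@set_val X A).
Proof. exact: initial_continuous. Qed.

Lemma ext_id_val (h : A -> A) (a : A) : ext_id h (set_val a) = set_val (h a).
Proof.
rewrite /ext_id; case: pselect => [Aa|]; last by case; apply: set_valP.
by congr (set_val (h _)); apply: val_inj.
Qed.

Lemma ext_id_in (h : A -> A) x (Ax : A x) :
  ext_id h x = set_val (h (exist _ x (mem_set Ax))).
Proof. by rewrite -ext_id_val. Qed.

Lemma ext_id_out (h : A -> A) x : ~ A x -> ext_id h x = x.
Proof. by rewrite /ext_id; case: pselect. Qed.

Lemma ext_id_inj : injective (@ext_id X A).
Proof.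
move=> h g hg; apply: funext => a; apply: val_inj.
by rewrite -!set_valE -(ext_id_val h) -(ext_id_val g) hg.
Qed.

Lemma ext_id_id : ext_id (@id A) = id.
Proof.
apply: funext => x; case: (pselect (A x)) => Ax; last by rewrite ext_id_out.
by rewrite ext_id_in.
Qed.

Lemma ext_id_comp (h g : A -> A) : ext_id (h \o g) = ext_id h \o ext_id g.
Proof.
apply: funext => x /=; case: (pselect (A x)) => Ax; last by rewrite !ext_id_out.
by rewrite (ext_id_in (h \o g) Ax) (ext_id_in g Ax) ext_id_val.
Qed.

Lemma ext_id_can (h g : A -> A) : cancel h g -> cancel (ext_id h) (ext_id g).
Proof.
move=> hg x; rewrite -[LHS]/((ext_id g \o ext_id h) x) -ext_id_comp.
by rewrite (_ : g \o h = id) ?ext_id_id //; apply: funext.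
Qed.

(* [a0] is a junk value off [A], needed only because [A] may be empty. *)
Definition retract (a0 : A) (x : X) : A :=
  match pselect (A x) with
  | left Ax => exist _ x (mem_set Ax)
  | right _ => a0
  end.

Lemma retract_val a0 (a : A) : retract a0 (set_val a) = a.
Proof.
rewrite /retract; case: pselect => [Aa|]; last by case; apply: set_valP.
exact: val_inj.
Qed.

Lemma val_retract a0 x : A x -> set_val (retract a0 x) = x.
Proof. by rewrite /retract; case: pselect. Qed.

Lemma retract_out a0 x : ~ A x -> retract a0 x = a0.
Proof. by rewrite /retract; case: pselect. Qed.

Hypotheses (oA : open A) (cA : closed A).

Lemma retract_continuous a0 : continuous (retract a0).
Proof.
apply/continuousP => _ [W oW <-].
have -> : retract a0 @^-1` (set_val @^-1` W) =
    (A `&` W) `|` (~` A `&` [set _ | W (set_val a0)]).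
  apply/seteqP; split => x /=.
    by case: (pselect (A x)) => Ax; [rewrite val_retract //; left|rewrite retract_out //; right].
  by case=> -[Ax Wx]; [rewrite val_retract|rewrite retract_out].
apply: openU; first exact: openI.
apply: openI; first by rewrite openC.
exact: open_const.
Qed.

Lemma compact_preimage_val (K : set X) :
  compact K -> compact (set_val @^-1` K : set A).
Proof.
move=> cK; have [[a0]|nA] := pselect (inhabited A).
  have -> : (set_val @^-1` K : set A) = retract a0 @` (K `&` A).
    apply/seteqP; split => [a Ka|_ [x [Kx Ax] <-]]; last by rewrite /= val_retract.
    by exists (set_val a); [split => //; apply: set_valP|apply: retract_val].
  apply: continuous_compact; last exact: compact_closedI.
  exact/continuous_subspaceT/retract_continuous.
rewrite (_ : _ @^-1` _ = set0); first exact: compact0.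
by apply/seteqP; split => // a; case: nA; exists.
Qed.

Lemma compact_image_val (K : set A) : compact K -> compact (set_val @` K).
Proof.
by move=> cK; apply: continuous_compact => //; exact/continuous_subspaceT/set_val_continuous.
Qed.

Lemma ext_id_continuous (h : A -> A) : continuous h -> continuous (ext_id h).
Proof.
move=> ch; apply/continuousP => W oW.
have [W' oW' W'E] : open (h @^-1` (set_val @^-1` W)).
  by apply: (continuousP h).1 => //; exact: (continuousP _).1 set_val_continuous _ oW.
have W'E' a : W' (set_val a) = W (set_val (h a)).
  by rewrite -[LHS]/((set_val @^-1` W') a) W'E.
have -> : ext_id h @^-1` W = (W' `&` A) `|` (W `&` ~` A).
  apply/seteqP; split => x /=; case: (pselect (A x)) => Ax.
  - by rewrite ext_id_in -W'E' => ?; left.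
  - by rewrite ext_id_out // => ?; right.
  - by rewrite ext_id_in -W'E' => -[[]|[]].
  - by rewrite ext_id_out // => -[[]|[]].
by apply: openU; apply: openI => //; rewrite openC.
Qed.

Lemma Homeo_cpt_ext_id (h : A -> A) :
  hausdorff_space X -> Homeo_cpt A h -> Homeo_cpt X (ext_id h).
Proof.
move=> hX [[ch [g [cg hg gh]]] sh]; split.
  split; first exact: ext_id_continuous.
  by exists (ext_id g); split; [exact: ext_id_continuous|exact: ext_id_can|exact: ext_id_can].
have cS := compact_image_val sh.
apply: (subclosed_compact _ cS); first exact: closed_closure.
rewrite [X in _ `<=` X](closure_id _).1; last exact: compact_closed.
apply: closureS => x /= hx.
case: (pselect (A x)) => Ax; last by move: hx; rewrite ext_id_out.
exists (exist _ x (mem_set Ax)) => //.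
by apply: subset_closure => /= hxx; apply: hx; rewrite ext_id_in hxx.
Qed.

Lemma fixed_outside_stable (g : X -> X) : injective g ->
  (forall x, ~ A x -> g x = x) -> forall x, A x -> A (g x).
Proof.
move=> ig gfix x Ax; apply: contrapT => nAgx.
by apply: (nAgx); rewrite (ig _ _ (gfix _ nAgx)).
Qed.

Definition restrict (g : X -> X) (a : A) : A := retract a (g (set_val a)).

Section Restrict.
Variable g : X -> X.
Hypothesis gA : forall x, A x -> A (g x).

Lemma val_restrict a : set_val (restrict g a) = g (set_val a).
Proof. by rewrite val_retract //; apply/gA/set_valP. Qed.

Lemma ext_id_restrict : (forall x, ~ A x -> g x = x) -> ext_id (restrict g) = g.
Proof.
move=> gfix; apply: funext => x.
case: (pselect (A x)) => Ax; last by rewrite ext_id_out ?gfix.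
by rewrite ext_id_in val_restrict.
Qed.

Lemma restrict_continuous : continuous g -> continuous (restrict g).
Proof.
move=> cg; apply/continuousP => _ [W oW <-].
exists (g @^-1` W); first exact: (continuousP g).1.
by apply/seteqP; split => a /=; rewrite val_restrict.
Qed.

End Restrict.

Lemma restrict_can (g g' : X -> X) :
  (forall x, A x -> A (g x)) -> (forall x, A x -> A (g' x)) ->
  cancel g g' -> cancel (restrict g) (restrict g').
Proof.
by move=> gA g'A gg' a; apply: val_inj; rewrite -!set_valE !val_restrict // gg'.
Qed.

Lemma Homeo_cpt_restrict (g : X -> X) : Homeo_cpt X g ->
  (forall x, ~ A x -> g x = x) -> Homeo_cpt A (restrict g).
Proof.
move=> [[cg [g' [cg' gg' g'g]]] sg] gfix.
have g'fix x : ~ A x -> g' x = x by move=> nAx; rewrite -{1}(gfix _ nAx) gg'.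
have gA := fixed_outside_stable (can_inj gg') gfix.
have g'A := fixed_outside_stable (can_inj g'g) g'fix.
split.
  split; first exact: restrict_continuous.
  exists (restrict g').
  by split; [exact: restrict_continuous|exact: restrict_can|exact: restrict_can].
apply: (subclosed_compact _ (compact_preimage_val sg)); first exact: closed_closure.
rewrite [X in _ `<=` X](closure_id _).1; last first.
  by apply: preimage_closed; [move=> a _; exact: set_val_continuous|exact: closed_closure].
apply: closureS => a /= ga; apply: subset_closure => /= gx; apply: ga.
by apply: val_inj; rewrite -set_valE val_restrict.
Qed.

Lemma ext_id_imageP (g : X -> X) : Homeo_cpt X g ->
  (@ext_id X A @` Homeo_cpt A) g <-> forall x, ~ A x -> g x = x.
Proof.
move=> gH; split => [[h _ <-] x|gfix]; first exact: ext_id_out.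
exists (restrict g); first exact: Homeo_cpt_restrict.
apply: ext_id_restrict => //; apply: fixed_outside_stable gfix.
by case: gH => -[_ [g' [_ /can_inj]]].
Qed.

Lemma Homeo_K_ext_id (h : A -> A) (K : set X) :
  Homeo_cpt A h -> Homeo_K K (ext_id h) -> Homeo_K (set_val @^-1` K : set A) h.
Proof.
move=> hH [_ hfix]; split => // a nKa; apply: val_inj.
by rewrite -!set_valE -ext_id_val hfix.
Qed.

End ClopenSubspace.

Section ExtensionAlongInjection.
Variables (S T : topologicalType) (j : S -> T).
Hypothesis ij : injective j.

Lemma bextE (h : S -> S) s : bext j h (j s) = j (h s).
Proof.
rewrite /bext; case: pselect => [P|]; last by case; exists s.
by case: cid => s' /= /ij ->.
Qed.

Lemma bext_out (h : S -> S) t : ~ (exists s, j s = t) -> bext j h t = t.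
Proof. by rewrite /bext; case: pselect. Qed.

Lemma bext_continuous : continuous j -> compact [set: S] -> hausdorff_space T ->
  continuous (bext j : {compact-open, S -> S} -> {compact-open, T -> T}).
Proof.
move=> cj cS hT phi.
have F := fmap_filter (bext j : {compact-open, S -> S} -> {compact-open, T -> T})
  (nbhs_filter phi).
apply/(compact_open_cvgP _ F).
move=> K W cK oW phiKW.
have cKj : compact (j @^-1` K).
  apply: (subclosed_compact _ cS) => //.
  by apply: preimage_closed; [move=> s _; exact: cj|exact: compact_closed].
apply: (@filterS _ _ _ [set psi : {compact-open, S -> S} | psi @` (j @^-1` K) `<=` j @^-1` W]).
  move=> psi psiKW _ [t Kt <-].
  case: (pselect (exists s, j s = t)) => [[s jst]|nt].
    by subst t; rewrite bextE; apply: (psiKW (psi s)); exists s.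
  by rewrite bext_out //; apply: phiKW; exists t => //; rewrite bext_out.
apply: open_nbhs_nbhs; split.
  by apply: compact_open_open => //; exact: (continuousP j).1.
move=> _ [s Ks <-] /=.
by rewrite -bextE; apply: phiKW; exists (j s).
Qed.

End ExtensionAlongInjection.

Lemma compact_open_comp_continuous (T1 T2 T3 T4 : topologicalType)
    (a : T1 -> T2) (b : T3 -> T4) : continuous a -> continuous b ->
  continuous ((fun psi => b \o psi \o a) :
    {compact-open, T2 -> T3} -> {compact-open, T1 -> T4}).
Proof.
move=> ca cb psi.
have F := fmap_filter ((fun psi => b \o psi \o a) :
  {compact-open, T2 -> T3} -> {compact-open, T1 -> T4}) (nbhs_filter psi).
apply/(compact_open_cvgP _ F).
move=> K W cK oW psiKW.
apply: (@filterS _ _ _ [set psi' : {compact-open, T2 -> T3} | psi' @` (a @` K) `<=` b @^-1` W]).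
  by move=> psi' H _ [t Kt <-]; apply: (H (psi' (a t))); exists (a t) => //; exists t.
apply: open_nbhs_nbhs; split.
  apply: compact_open_open; last exact: (continuousP b).1.
  by apply: continuous_compact => //; exact: continuous_subspaceT.
by move=> _ [_ [t Kt <-] <-]; apply: (psiKW (b (psi (a t)))); exists t.
Qed.

Lemma compact_open_moving_open (T : topologicalType) (t : T) : hausdorff_space T ->
  open [set psi : {compact-open, T -> T} | psi t <> t].
Proof.
move=> hT; rewrite openE => psi /eqP psit.
move: hT; rewrite open_hausdorff => /(_ _ _ psit) [[P Q]] /= [Ppsi Qt] [oP oQ /eqP PQ].
apply: (@filterS _ _ _ [set psi' : {compact-open, T -> T} | psi' @` [set t] `<=` P]).
  move=> psi' psi'P psi't; have : (P `&` Q) t.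
    by split; [rewrite -psi't; apply: psi'P; exists t|rewrite -inE].
  by rewrite PQ.
apply: open_nbhs_nbhs; split; first by apply: compact_open_open => //; exact: compact_set1.
by move=> _ [_ -> <-]; rewrite -inE.
Qed.

Section HomeoCptTopology.
Variables (Y bY : topologicalType) (e : Y -> bY).

Lemma HC_open_sub U : HC_open e U -> U `<=` Homeo_cpt Y.
Proof. by move=> [V [_ ->]] h []. Qed.

Lemma HC_openU U1 U2 : HC_open e U1 -> HC_open e U2 -> HC_open e (U1 `|` U2).
Proof.
move=> [V1 [oV1 ->]] [V2 [oV2 ->]]; exists (V1 `|` V2); split; first exact: openU.
apply/seteqP; split => g /=; first by case=> -[gH Vg]; split => //; [left|right].
by case=> gH [Vg|Vg]; [left|right].
Qed.

Lemma HC_open_const (P : Prop) : HC_open e (Homeo_cpt Y `&` [set _ | P]).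
Proof. by exists [set _ | P]; split; first exact: open_const. Qed.

Lemma HC_open_colim_open U : HC_open e U -> HC_colim_open e U.
Proof.
move=> oU; split; first exact: HC_open_sub.
by move=> K _; exists U; split => //; rewrite setIC.
Qed.

End HomeoCptTopology.

Section ClopenStoneCech.
Variables (X : topologicalType) (A : set X).
Variables (bX bA : topologicalType) (eX : X -> bX) (eA : A -> bA).
Hypotheses (scX : is_stone_cech eX) (scA : is_stone_cech eA).
Hypotheses (oA : open A) (cA : closed A).

Lemma stone_cech_val_extend :
  exists j : bA -> bX, continuous j /\ forall a, j (eA a) = eX (set_val a).
Proof.
apply: (stone_cech_extend scA) (stone_cech_compact scX) (stone_cech_hausdorff scX) _.
by move=> a; apply: continuous_comp; [exact: set_val_continuous|exact: stone_cech_continuous].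
Qed.

Section ValExtension.
Variable j : bA -> bX.
Hypotheses (cj : continuous j) (jE : forall a, j (eA a) = eX (set_val a)).

Lemma stone_cech_retract (a0 : A) : exists p : bX -> bA,
  [/\ continuous p, cancel j p & forall x, p (eX x) = eA (retract a0 x)].
Proof.
have [|p [cp pE]] := stone_cech_extend scX (f := eA \o retract a0)
  (stone_cech_compact scA) (stone_cech_hausdorff scA).
  move=> x; apply: continuous_comp; first exact: retract_continuous.
  exact: stone_cech_continuous.
exists p; split => // w.
suff /(congr1 (fun f => f w)) : p \o j = id by [].
apply: (stone_cech_ext_unique scA (stone_cech_hausdorff scA)).
- by move=> v; apply: continuous_comp; [exact: cj|exact: cp].
- by move=> v.
- by move=> a /=; rewrite jE pE /= retract_val.
Qed.

Lemma val_extend_inj : injective j.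
Proof.
move=> w w' jw; have [a0] := stone_cech_inhabited scA w.
by have [p [_ jK _]] := stone_cech_retract a0; rewrite -(jK w) jw jK.
Qed.

Lemma val_extend_range w : (exists x, eX x = j w) -> exists a, eA a = w.
Proof.
move=> [x xw]; have [a0] := stone_cech_inhabited scA w.
have [p [_ jK pE]] := stone_cech_retract a0.
by exists (retract a0 x) => //; rewrite -pE xw jK.
Qed.

Lemma bext_ext_id (h : A -> A) : bext eX (ext_id h) = bext j (bext eA h).
Proof.
have ieX := stone_cech_injective scX; have ieA := stone_cech_injective scA.
have ij := val_extend_inj.
apply: funext => z; case: (pselect (exists w, j w = z)) => [[w <-]|nz].
  rewrite bextE //; case: (pselect (exists a, eA a = w)) => [[a <-]|nw].
    by rewrite bextE // jE bextE // ext_id_val jE.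
  by rewrite (bext_out _ nw) (bext_out (j := eX)) // => /val_extend_range.
rewrite (bext_out (j := j)) //.
case: (pselect (exists x, eX x = z)) => [[x xz]|nx]; last by rewrite (bext_out (j := eX)).
subst z.
rewrite bextE //; case: (pselect (A x)) => Ax; last by rewrite ext_id_out.
by case: nz; exists (eA (exist _ x (mem_set Ax))); rewrite jE.
Qed.

Lemma bext_eA_factor (a0 : A) (p : bX -> bA) :
  cancel j p -> (forall x, p (eX x) = eA (retract a0 x)) ->
  forall h, bext eA h = p \o bext eX (ext_id h) \o j.
Proof.
have ieX := stone_cech_injective scX; have ieA := stone_cech_injective scA.
move=> jK pE h; apply: funext => w /=.
case: (pselect (exists a, eA a = w)) => [[a <-]|nw].
  by rewrite bextE // jE bextE // ext_id_val pE retract_val.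
by rewrite (bext_out (j := eA)) // (bext_out (j := eX)) ?jK // => /val_extend_range.
Qed.

End ValExtension.

Hypothesis hX : hausdorff_space X.

Let not_extended := Homeo_cpt X `\` @ext_id X A @` Homeo_cpt A.

Lemma HC_open_ext_id_preimage W :
  HC_open eX W -> HC_open eA (Homeo_cpt A `&` @ext_id X A @^-1` W).
Proof.
have [j [cj jE]] := stone_cech_val_extend.
have cbj := bext_continuous (val_extend_inj cj jE) cj (stone_cech_compact scA)
  (stone_cech_hausdorff scX).
move=> [V [oV ->]]; exists (bext j @^-1` V); split; first exact: (continuousP _).1 cbj V oV.
apply/seteqP; split => h /=.
  by move=> [hH [_ hV]]; split => //; rewrite -(bext_ext_id cj jE).
by move=> [hH hV]; split => //; split; [exact: Homeo_cpt_ext_id|rewrite (bext_ext_id cj jE)].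
Qed.

Lemma HC_open_ext_id_image U : HC_open eA U -> exists W, HC_open eX W /\
  @ext_id X A @` U = @ext_id X A @` Homeo_cpt A `&` W.
Proof.
move=> oU; have UH := HC_open_sub oU; case: oU => V [oV UE].
have [[a0]|nA] := pselect (inhabited A).
  have [j [cj jE]] := stone_cech_val_extend.
  have [p [cp jK pE]] := stone_cech_retract cj jE a0.
  have bext_eA_E := bext_eA_factor cj jE jK pE.
  pose sandwich (psi : {compact-open, bX -> bX}) : {compact-open, bA -> bA} := p \o psi \o j.
  exists (Homeo_cpt X `&` bext eX @^-1` (sandwich @^-1` V)); split.
    exists (sandwich @^-1` V); split => //.
    exact: (continuousP _).1 (compact_open_comp_continuous cj cp) V oV.
  rewrite UE; apply/seteqP; split.
    move=> _ [h [hH hV] <-]; split; first by exists h.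
    by split; [exact: Homeo_cpt_ext_id|rewrite /preimage /= /sandwich -bext_eA_E].
  move=> _ [[h hH <-] [_ hV]]; exists h => //; split => //.
  by move: hV; rewrite /preimage /= /sandwich -bext_eA_E.
(* A is empty, so Homeo_cpt A has at most one element. *)
exists (Homeo_cpt X `&` [set _ | U !=set0]); split; first exact: HC_open_const.
have hE (h g : A -> A) : h = g by apply: funext => a; case: nA; exists.
apply/seteqP; split.
  move=> _ [h Uh <-]; split; first by exists h => //; exact: UH.
  by split; [exact/Homeo_cpt_ext_id/UH|exists h].
by move=> _ [[h _ <-] [_ [g Ug]]]; exists g; rewrite // (hE h g).
Qed.

Lemma HC_open_compl_ext_id_image : HC_open eX not_extended.
Proof.
have ieX := stone_cech_injective scX.
exists (\bigcup_(x in ~` A) [set psi : {compact-open, bX -> bX} | psi (eX x) <> eX x]).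
split.
  apply: bigcup_open => x _; apply: compact_open_moving_open.
  exact: stone_cech_hausdorff scX.
apply/seteqP; split => g /=.
  move=> [gH ng]; split => //; apply: contrapT => nmove; apply: ng.
  apply/(ext_id_imageP oA cA gH) => x nAx; apply: contrapT => gx; apply: nmove.
  by exists x => //=; rewrite bextE // => /ieX.
move=> [gH [x nAx]]; rewrite /= bextE // => gx; split => //.
by move/(ext_id_imageP oA cA gH) => gfix; apply: gx; rewrite gfix.
Qed.

Lemma HC_colim_open_ext_id_image U :
  HC_colim_open eA U -> HC_colim_open eX (@ext_id X A @` U `|` not_extended).
Proof.
move=> [UH Ucol]; split.
  by move=> g [[h Uh <-]|[]] //; apply/Homeo_cpt_ext_id/UH.
move=> K cK.
have [WA [oWA WAE]] := Ucol _ (compact_preimage_val oA cA cK).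
have [W [oW WE]] := HC_open_ext_id_image oWA.
exists (W `|` not_extended); split; first exact: HC_openU oW HC_open_compl_ext_id_image.
apply/seteqP; split => g.
  case=> [[[h Uh <-]|Cg] HKg]; split => //; last by right.
  have : (U `&` Homeo_K (set_val @^-1` K : set A)) h.
    by split => //; apply: Homeo_K_ext_id => //; exact: UH.
  rewrite WAE => -[_ WAh]; left.
  have : (@ext_id X A @` WA) (ext_id h) by exists h.
  by rewrite WE => -[].
case=> HKg [Wg|Cg]; split => //; last by right.
have [[h hH hg]|nimg] := pselect ((@ext_id X A @` Homeo_cpt A) g); last first.
  by right; split => //; case: HKg.
subst g; left; exists h => //.
have : (@ext_id X A @` Homeo_cpt A `&` W) (ext_id h) by split => //; exists h.
rewrite -WE => -[h' WAh' /ext_id_inj h'h]; subst h'.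
have : (Homeo_K (set_val @^-1` K : set A) `&` WA) h.
  by split => //; apply: Homeo_K_ext_id.
by rewrite -WAE => -[].
Qed.

Lemma CSHP_clopen : CSHP eX -> CSHP eA.
Proof.
move=> cX U; split; last exact: HC_open_colim_open.
move=> colU; have UH := colU.1.
rewrite (_ : U = Homeo_cpt A `&` @ext_id X A @^-1` (@ext_id X A @` U `|` not_extended)).
  exact/HC_open_ext_id_preimage/cX/HC_colim_open_ext_id_image.
apply/seteqP; split => h.
  by move=> Uh; split; [exact: UH|left; exists h].
by move=> [hH [[g Ug /ext_id_inj <-]|[_ []]]] //; exists h.
Qed.

End ClopenStoneCech.

Unset Implicit Arguments.
Set Strict Implicit.

Theorem lemma5p3 (X : topologicalType) (A : set X)
  (bX : topologicalType) (eX : X -> bX)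
  (bA : topologicalType) (eA : A -> bA) :
  tychonoff_space X -> clopen A ->
  is_stone_cech eX -> is_stone_cech eA ->
  (* (a) extension by the identity embeds Homeo_cpt(A) as a closed
     topological subgroup of Homeo_cpt(X) *)
  (([/\ (forall h, Homeo_cpt A h -> Homeo_cpt X (ext_id h)),
       {in Homeo_cpt A &, injective (@ext_id X A)},
       ext_id (@id A) = id &
       (forall h g, Homeo_cpt A h -> Homeo_cpt A g ->
          ext_id (h \o g) = ext_id h \o ext_id g)] /\
   [/\
       (forall W, HC_open eX W ->
          HC_open eA (Homeo_cpt A `&` (@ext_id X A) @^-1` W)),
       (forall U, HC_open eA U ->
          exists W, HC_open eX W /\
            (@ext_id X A) @` U = (@ext_id X A) @` Homeo_cpt A `&` W) &
       HC_open eX (Homeo_cpt X `\` (@ext_id X A) @` Homeo_cpt A)])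
  /\
  (* (b) CSHP passes from X to A *)
  (CSHP eX -> CSHP eA)).
Proof.
move=> [_ hX] [oA cA] scX scA; split; last exact: CSHP_clopen.
split; split.
- by move=> h; exact: Homeo_cpt_ext_id.
- by move=> h g _ _; exact: ext_id_inj.
- exact: ext_id_id.
- by move=> h g _ _; exact: ext_id_comp.
- exact: HC_open_ext_id_preimage.
- exact: HC_open_ext_id_image.
- exact: HC_open_compl_ext_id_image.
Qed.
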